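(* Let $(H,B_1,B_2)$ be a Rota-Baxter system of Hopf algebras with descendent operation $\circ$ and cocycle $\sigma$. Then $(H,\cdot,\circ)$ is a Hopf truss with cocycle $\sigma$.
   Context: $\mathbb{F}$ is a field of characteristic $0$; Sweedler notation $\Delta(a)=a_1\otimes a_2$. A Rota-Baxter system of Hopf algebras is a triple $(H,B_1,B_2)$ where $(H,\cdot,1,\Delta,\epsilon,S)$ is a cocommutative Hopf algebra and $B_1,B_2:H\to H$ are coalgebra homomorphisms with $B_1(1)=B_2(1)=1$ such that for all $a,b\in H$: $B_1(a)B_1(b)=B_1(B_1(a_1)bS(B_2(a_2)))$ and $B_2(a)B_2(b)=B_2(B_1(a_1)bS(B_2(a_2)))$. Its descendent operation is $a\circ b=B_1(a_1)bS(B_2(a_2))$ and cocycle $\sigma(a)=B_1(a_1)S(B_2(a_2))$. Given a Hopf algebra $(H,\cdot,1,\Delta,\epsilon,S)$ and a binary operation $\circ$ on $H$ making $(H,\circ,\Delta,\epsilon)$ a (not necessarily unital) bialgebra (i.e. $\circ$ is associative and $\Delta,\epsilon$ are multiplicative for $\circ$), $(H,\cdot,\circ)$ is a Hopf truss with cocycle $\sigma$ if $\sigma:H\to H$ is a coalgebra homomorphism and $a\circ(bc)=(a_1\circ b)S(\sigma(a_2))(a_3\circ c)$ for all $a,b,c\in H$. *)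

From HB Require Import structures.
From mathcomp Require Import all_boot all_order all_algebra.
Set Implicit Arguments. Unset Strict Implicit. Unset Printing Implicit Defensive.
Import Order.TTheory GRing.Theory Num.Theory.
Local Open Scope ring_scope.

(* MathComp has no tensor product of abstract
   vector spaces, so an element  sum_i x_i (x) y_i  of H (x) H is represented
   by a finite list of pairs [:: (x_i, y_i)], and two such lists denote the
   same tensor iff every bilinear map into every F-vector space takes the same
   value on them (this is exactly equality in H (x) H, by the universal
   property).  Likewise for H (x) H (x) H with trilinear maps.
   The coproduct  Delta a = a_1 (x) a_2  is a function  delta : H -> seq (H*H)
   and Sweedler sums  f(a_1, a_2)  are  \sum_(p <- delta a) f p.1 p.2. *)

Section HopfDefs.
Variables (F : fieldType) (H : algType F).

Definition islin (W : lmodType F) (g : H -> W) : Prop :=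
  forall (k : F) (u v : H), g (k *: u + v) = k *: g u + g v.

Definition bilin (W : lmodType F) (f : H -> H -> W) : Prop :=
  (forall y, islin (fun x => f x y)) /\ (forall x, islin (f x)).

Definition trilin (W : lmodType F) (f : H -> H -> H -> W) : Prop :=
  (forall y z, islin (fun x => f x y z)) /\ (forall x z, islin (fun y => f x y z))
  /\ (forall x y, islin (f x y)).

Definition teq2 (s t : seq (H * H)) : Prop :=
  forall (W : lmodType F) (f : H -> H -> W), bilin f ->
    \sum_(p <- s) f p.1 p.2 = \sum_(p <- t) f p.1 p.2.

Definition teq3 (s t : seq (H * H * H)) : Prop :=
  forall (W : lmodType F) (f : H -> H -> H -> W), trilin f ->
    \sum_(p <- s) f p.1.1 p.1.2 p.2 = \sum_(p <- t) f p.1.1 p.1.2 p.2.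

Definition eps_lin (eps : H -> F) : Prop :=
  forall (k : F) (u v : H), eps (k *: u + v) = k * eps u + eps v.

Definition delta3l (delta : H -> seq (H * H)) (a : H) : seq (H * H * H) :=
  flatten [seq [seq (q.1, q.2, p.2) | q <- delta p.1] | p <- delta a].
Definition delta3r (delta : H -> seq (H * H)) (a : H) : seq (H * H * H) :=
  flatten [seq [seq (p.1, q.1, q.2) | q <- delta p.2] | p <- delta a].

Record is_hopf (delta : H -> seq (H * H)) (eps : H -> F) (S : H -> H) : Prop := {
  hopf_delta_lin : forall (k : F) (a b : H),
    teq2 (delta (k *: a + b)) ([seq (k *: p.1, p.2) | p <- delta a] ++ delta b);
  hopf_eps_lin : eps_lin eps;
  hopf_coassoc : forall a, teq3 (delta3l delta a) (delta3r delta a);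
  hopf_counitl : forall a, \sum_(p <- delta a) eps p.1 *: p.2 = a;
  hopf_counitr : forall a, \sum_(p <- delta a) eps p.2 *: p.1 = a;
  hopf_delta_mul : forall a b,
    teq2 (delta (a * b)) [seq (p.1 * q.1, p.2 * q.2) | p <- delta a, q <- delta b];
  hopf_delta_one : teq2 (delta 1) [:: (1, 1)];
  hopf_eps_mul : forall a b, eps (a * b) = eps a * eps b;
  hopf_eps_one : eps 1 = 1;
  hopf_S_lin : islin S;
  hopf_antipodel : forall a, \sum_(p <- delta a) S p.1 * p.2 = eps a *: 1;
  hopf_antipoder : forall a, \sum_(p <- delta a) p.1 * S p.2 = eps a *: 1
}.

Definition cocommutative (delta : H -> seq (H * H)) : Prop :=
  forall a, teq2 (delta a) [seq (p.2, p.1) | p <- delta a].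

Definition coalg_hom (delta : H -> seq (H * H)) (eps : H -> F) (B : H -> H) : Prop :=
  [/\ islin B,
      forall a, teq2 (delta (B a)) [seq (B p.1, B p.2) | p <- delta a]
    & forall a, eps (B a) = eps a].

Definition descendent (delta : H -> seq (H * H)) (S B1 B2 : H -> H) (a b : H) : H :=
  \sum_(p <- delta a) B1 p.1 * b * S (B2 p.2).

Definition rbs_cocycle (delta : H -> seq (H * H)) (S B1 B2 : H -> H) (a : H) : H :=
  \sum_(p <- delta a) B1 p.1 * S (B2 p.2).

Record is_RBsystem (delta : H -> seq (H * H)) (eps : H -> F) (S B1 B2 : H -> H)
  : Prop := {
  rbs_hopf : is_hopf delta eps S;
  rbs_cocomm : cocommutative delta;
  rbs_B1_hom : coalg_hom delta eps B1;
  rbs_B2_hom : coalg_hom delta eps B2;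
  rbs_B1_one : B1 1 = 1;
  rbs_B2_one : B2 1 = 1;
  rbs_B1_eq : forall a b, B1 a * B1 b = B1 (descendent delta S B1 B2 a b);
  rbs_B2_eq : forall a b, B2 a * B2 b = B2 (descendent delta S B1 B2 a b)
}.

Record is_hopf_truss (delta : H -> seq (H * H)) (eps : H -> F) (S : H -> H)
  (circ : H -> H -> H) (sig : H -> H) : Prop := {
  truss_hopf : is_hopf delta eps S;
  (* (H, o, delta, eps) is a (not necessarily unital) bialgebra *)
  truss_circ_bilin : bilin circ;
  truss_circ_assoc : forall a b c, circ a (circ b c) = circ (circ a b) c;
  truss_delta_circ : forall a b,
    teq2 (delta (circ a b)) [seq (circ p.1 q.1, circ p.2 q.2) | p <- delta a, q <- delta b];
  truss_eps_circ : forall a b, eps (circ a b) = eps a * eps b;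
  truss_sig_hom : coalg_hom delta eps sig;
  truss_eq : forall a b c,
    circ a (b * c) = \sum_(p <- delta3l delta a) circ p.1.1 b * S (sig p.1.2) * circ p.2 c
}.

End HopfDefs.

From HB Require Import structures.
From mathcomp Require Import all_boot all_order all_algebra.
Import GRing.Theory.
Local Open Scope ring_scope.
Set Implicit Arguments. Unset Strict Implicit.

(* Write [a o b = B1(a_1) b S(B2(a_2))].  The antipode reverses products and coproducts,
   so for cocommutative [H] the maps [Delta] and [eps] are multiplicative for [o]; the
   Rota-Baxter identities say that [B1] and [B2] turn [o] into the product, which with
   [S(xy) = S(y) S(x)] gives associativity of [o].  The cocycle is [sigma(a) = a o 1], hence
   a coalgebra map, and [sigma(a_1) B2(a_2) = B1(a)] yields [S(sigma(a_1)) B1(a_2) = B2(a)].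
   In [(a_1 o b) S(sigma(a_2)) (a_3 o c)] this turns the middle factors
   [S(B2(a_2)) S(sigma(a_3)) B1(a_4)] into [S(B2(a_2)) B2(a_3)], and the antipode and counit
   axioms leave [B1(a_1) b c S(B2(a_2)) = a o (b c)]. *)

Section Linearity.
Variables (F : fieldType) (H : algType F).
Implicit Types W : lmodType F.

Lemma islin0 W (f : H -> W) : islin f -> f 0 = 0.
Proof.
move=> hf; have := hf 1 0 0; rewrite !scale1r addr0.
by rewrite -{1}[f 0]addr0 => /addrI <-.
Qed.

Lemma islinD W (f : H -> W) u v : islin f -> f (u + v) = f u + f v.
Proof. by move=> hf; rewrite -{1}[u]scale1r hf scale1r. Qed.

Lemma islinZ W (f : H -> W) k u : islin f -> f (k *: u) = k *: f u.
Proof. by move=> hf; rewrite -[k *: u]addr0 hf islin0 // addr0. Qed.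

Lemma islin_sum W (f : H -> W) I (s : seq I) (P : pred I) (G : I -> H) :
  islin f -> f (\sum_(i <- s | P i) G i) = \sum_(i <- s | P i) f (G i).
Proof. by move=> hf; apply: big_morph => [u v|]; [apply: islinD | apply: islin0]. Qed.

Lemma islin_id : islin (fun x : H => x). Proof. by []. Qed.

Lemma islin_comp W (L : H -> W) (f : H -> H) :
  islin L -> islin f -> islin (fun x => L (f x)).
Proof. by move=> hL hf k u v; rewrite hf hL. Qed.

Lemma islin_mulr (f : H -> H) (c : H) : islin f -> islin (fun x => f x * c).
Proof. by move=> hf k u v; rewrite hf mulrDl scalerAl. Qed.

Lemma islin_mull (c : H) (f : H -> H) : islin f -> islin (fun x => c * f x).
Proof. by move=> hf k u v; rewrite hf mulrDr scalerAr. Qed.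

Lemma islin_scale W (k : F) (f : H -> W) : islin f -> islin (fun x => k *: f x).
Proof. by move=> hf k' u v; rewrite hf scalerDr !scalerA mulrC. Qed.

Lemma islin_add W (f g : H -> W) : islin f -> islin g -> islin (fun x => f x + g x).
Proof. by move=> hf hg k u v; rewrite hf hg scalerDr addrACA. Qed.

Lemma islin_sum_fun W I (s : seq I) (G : I -> H -> W) :
  (forall i, islin (G i)) -> islin (fun x => \sum_(i <- s) G i x).
Proof.
by move=> hG k u v; rewrite scaler_sumr -big_split; apply: eq_bigr => i _; apply: hG.
Qed.

Lemma islin_compl W (f : H -> H -> W) (g : H -> H) c :
  (forall y, islin (fun x => f x y)) -> islin g -> islin (fun x => f (g x) c).
Proof. by move=> hf hg k u v; rewrite hg hf. Qed.

Lemma islin_compr W (f : H -> H -> W) (g : H -> H) c :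
  (forall x, islin (f x)) -> islin g -> islin (fun y => f c (g y)).
Proof. by move=> hf hg k u v; rewrite hg hf. Qed.

Definition quadrilin W (g : H -> H -> H -> H -> W) :=
  [/\ forall y z w, islin (fun x => g x y z w), forall x z w, islin (fun y => g x y z w),
      forall x y w, islin (fun z => g x y z w) & forall x y z, islin (g x y z)].

Definition quintilin W (g : H -> H -> H -> H -> H -> W) :=
  [/\ forall y z w t, islin (fun x => g x y z w t),
      forall x z w t, islin (fun y => g x y z w t),
      forall x y w t, islin (fun z => g x y z w t),
      forall x y z t, islin (fun w => g x y z w t)
    & forall x y z w, islin (g x y z w)].

End Linearity.

Section HopfAlgebra.
Variables (F : fieldType) (H : algType F).
Variables (delta : H -> seq (H * H)) (eps : H -> F) (S : H -> H).
Hypothesis hopfH : is_hopf delta eps S.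
Implicit Types W : lmodType F.

Definition Sw W (a : H) (f : H -> H -> W) : W := \sum_(p <- delta a) f p.1 p.2.

Lemma eq_Sw W a (f g : H -> H -> W) : (forall x y, f x y = g x y) -> Sw a f = Sw a g.
Proof. by move=> e; apply: eq_bigr => p _; apply: e. Qed.

Lemma exchange_Sw W a b (g : H -> H -> H -> H -> W) :
  Sw a (fun x y => Sw b (fun u v => g x y u v)) = Sw b (fun u v => Sw a (fun x y => g x y u v)).
Proof. exact: exchange_big. Qed.

Lemma Sw_mull a c (f : H -> H -> H) : Sw a (fun x y => c * f x y) = c * Sw a f.
Proof. by rewrite /Sw mulr_sumr. Qed.

Lemma Sw_mulr a c (f : H -> H -> H) : Sw a (fun x y => f x y * c) = Sw a f * c.
Proof. by rewrite /Sw mulr_suml. Qed.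

Lemma Sw_scale W a k (f : H -> H -> W) : Sw a (fun x y => k *: f x y) = k *: Sw a f.
Proof. by rewrite /Sw scaler_sumr. Qed.

Lemma Sw_lin W (L : H -> W) a (f : H -> H -> H) :
  islin L -> Sw a (fun x y => L (f x y)) = L (Sw a f).
Proof. by move=> hL; rewrite /Sw islin_sum. Qed.

Let eps_islin : islin (eps : H -> F^o). Proof. exact: (hopf_eps_lin hopfH). Qed.
Let hS : islin S := hopf_S_lin hopfH.
Let eps1 : eps 1 = 1 := hopf_eps_one hopfH.
Let epsM : forall a b, eps (a * b) = eps a * eps b := hopf_eps_mul hopfH.

Lemma eps_sum I (s : seq I) (G : I -> H) : eps (\sum_(i <- s) G i) = \sum_(i <- s) eps (G i).
Proof. exact: (islin_sum _ _ _ eps_islin). Qed.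

Lemma eps_scale k u : eps (k *: u) = k * eps u.
Proof. exact: (islinZ _ _ eps_islin). Qed.

Lemma islin_epsZ W (f : H -> H) (c : W) : islin f -> islin (fun x => eps (f x) *: c).
Proof. by move=> hf k u v; rewrite hf (hopf_eps_lin hopfH) scalerDl scalerA. Qed.

Lemma Sw_islin W (f : H -> H -> W) : bilin f -> islin (fun a => Sw a f).
Proof.
move=> hf k a b; rewrite /Sw (hopf_delta_lin hopfH k a b hf); case: hf => hf1 _.
rewrite big_cat big_map /= scaler_sumr; congr (_ + _); apply: eq_bigr => p _.
exact: (islinZ k p.1 (hf1 p.2)).
Qed.

Lemma Sw_Sw W a (g : H -> H -> H) (f : H -> H -> W) : bilin f ->
  Sw (Sw a g) f = Sw a (fun x y => Sw (g x y) f).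
Proof. by move=> hf; apply: (islin_sum _ _ _ (Sw_islin hf)). Qed.

Lemma islin_Sw W (g : H -> H -> W) (f : H -> H) :
  bilin g -> islin f -> islin (fun x => Sw (f x) g).
Proof. by move=> hg; apply: (islin_comp (L := fun a => Sw a g)); apply: Sw_islin. Qed.

Lemma islin_Sw_fun W a (g : H -> H -> H -> W) :
  (forall u v, islin (g u v)) -> islin (fun z => Sw a (fun u v => g u v z)).
Proof. by move=> hg; apply: islin_sum_fun => p; apply: hg. Qed.

Ltac lin :=
  cbv beta;
  first
  [ assumption
  | exact: islin_id
  | apply: islin_add; [lin | lin]
  | apply: islin_mulr; lin
  | apply: islin_mull; lin
  | apply: islin_scale; lin
  | apply: islin_epsZ; lin
  | apply: islin_Sw; [split; intros; lin | lin]
  | apply: islin_Sw_fun => ? ?; lin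
  | apply: islin_sum_fun => ?; lin
  | apply: islin_comp; [assumption | lin]
  | apply: islin_compl; [assumption | lin]
  | apply: islin_compr; [assumption | lin]
  | match goal with h : forall _, _ |- _ => apply: h end ].

Ltac multilin := repeat split; intros; lin.

(* [Sw4 a g] is [g a_1 a_2 a_3 a_4], reached by always splitting the last tensor factor;
   by coassociativity, [Swn_split_i] splits the i-th factor instead. *)
Definition Sw3 W a (g : H -> H -> H -> W) := Sw a (fun x y => Sw y (fun u v => g x u v)).
Definition Sw4 W a (g : H -> H -> H -> H -> W) := Sw3 a (fun x y z => Sw z (fun u v => g x y u v)).
Definition Sw5 W a (g : H -> H -> H -> H -> H -> W) :=
  Sw4 a (fun x y z w => Sw w (fun u v => g x y z u v)).

Lemma eq_Sw3 W a (f g : H -> H -> H -> W) :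
  (forall x y z, f x y z = g x y z) -> Sw3 a f = Sw3 a g.
Proof. by move=> e; apply: eq_Sw => x y; apply: eq_Sw => u v; apply: e. Qed.

Lemma eq_Sw4 W a (f g : H -> H -> H -> H -> W) :
  (forall x y z w, f x y z w = g x y z w) -> Sw4 a f = Sw4 a g.
Proof. by move=> e; apply: eq_Sw3 => x y z; apply: eq_Sw => u v; apply: e. Qed.

Lemma sum_delta3l W a (g : H -> H -> H -> W) :
  \sum_(p <- delta3l delta a) g p.1.1 p.1.2 p.2 = Sw a (fun x y => Sw x (fun u v => g u v y)).
Proof. by rewrite /delta3l big_flatten /= big_map; apply: eq_bigr => p _; rewrite big_map. Qed.

Lemma Sw3_split1 W a (g : H -> H -> H -> W) : trilin g ->
  Sw a (fun x y => Sw x (fun u v => g u v y)) = Sw3 a g.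
Proof.
move=> hg; have := hopf_coassoc hopfH a hg.
rewrite sum_delta3l /delta3r big_flatten /= big_map => ->.
by apply: eq_bigr => p _; rewrite big_map.
Qed.

Lemma Sw4_split2 W a (g : H -> H -> H -> H -> W) : quadrilin g ->
  Sw3 a (fun x y z => Sw y (fun u v => g x u v z)) = Sw4 a g.
Proof.
case=> *; apply: eq_Sw => x Y.
by apply: (@Sw3_split1 _ _ (fun u v z => g x u v z)); multilin.
Qed.

Lemma Sw4_split1 W a (g : H -> H -> H -> H -> W) : quadrilin g ->
  Sw3 a (fun x y z => Sw x (fun u v => g u v y z)) = Sw4 a g.
Proof.
case=> *; rewrite /Sw4 /Sw3.
transitivity (Sw a (fun X Y => Sw X (fun u v => Sw Y (fun y z => g u v y z)))).
  by apply: eq_Sw => X Y; apply: exchange_Sw.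
by apply: (@Sw3_split1 _ _ (fun u v Y => Sw Y (fun y z => g u v y z))); multilin.
Qed.

Lemma Sw5_split3 W a (g : H -> H -> H -> H -> H -> W) : quintilin g ->
  Sw4 a (fun x y z w => Sw z (fun u v => g x y u v w)) = Sw5 a g.
Proof.
case=> *; apply: eq_Sw3 => x y Z.
by apply: (@Sw3_split1 _ _ (fun u v w => g x y u v w)); multilin.
Qed.

Lemma Sw4_split_both W a (g : H -> H -> H -> H -> W) : quadrilin g ->
  Sw a (fun x y => Sw x (fun x1 x2 => Sw y (fun y1 y2 => g x1 x2 y1 y2))) = Sw4 a g.
Proof.
by case=> *; apply: (@Sw3_split1 _ _ (fun x1 x2 y => Sw y (fun y1 y2 => g x1 x2 y1 y2)));
  multilin.
Qed.

Lemma Sw_counitl W (L : H -> W) a : islin L -> Sw a (fun x y => eps x *: L y) = L a.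
Proof.
move=> hL; rewrite -{2}(hopf_counitl hopfH a) islin_sum //.
by apply: eq_bigr => p _; rewrite islinZ.
Qed.

Lemma Sw_counitr W (L : H -> W) a : islin L -> Sw a (fun x y => eps y *: L x) = L a.
Proof.
move=> hL; rewrite -{2}(hopf_counitr hopfH a) islin_sum //.
by apply: eq_bigr => p _; rewrite islinZ.
Qed.

Lemma Sw_antipodel W (L : H -> W) a : islin L -> Sw a (fun x y => L (S x * y)) = eps a *: L 1.
Proof. by move=> hL; rewrite -islinZ // -(hopf_antipodel hopfH a) islin_sum. Qed.

Lemma Sw_antipoder W (L : H -> W) a : islin L -> Sw a (fun x y => L (x * S y)) = eps a *: L 1.
Proof. by move=> hL; rewrite -islinZ // -(hopf_antipoder hopfH a) islin_sum. Qed.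

Lemma Sw_counitl_eq W (L : H -> W) a (g : H -> H -> W) :
  islin L -> (forall x y, g x y = eps x *: L y) -> Sw a g = L a.
Proof. by move=> hL e; rewrite -(Sw_counitl a hL); apply: eq_Sw. Qed.

Lemma Sw_counitr_eq W (L : H -> W) a (g : H -> H -> W) :
  islin L -> (forall x y, g x y = eps y *: L x) -> Sw a g = L a.
Proof. by move=> hL e; rewrite -(Sw_counitr a hL); apply: eq_Sw. Qed.

Lemma Sw_antipoder_eq W (L : H -> W) a (g : H -> H -> W) :
  islin L -> (forall x y, g x y = L (x * S y)) -> Sw a g = eps a *: L 1.
Proof. by move=> hL e; rewrite -(Sw_antipoder a hL); apply: eq_Sw. Qed.

Lemma Sw_mul W a b (f : H -> H -> W) : bilin f ->
  Sw (a * b) f = Sw a (fun x y => Sw b (fun u v => f (x * u) (y * v))).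
Proof. by move=> hf; rewrite /Sw (hopf_delta_mul hopfH a b hf) big_allpairs_dep. Qed.

Lemma Sw_one W (f : H -> H -> W) : bilin f -> Sw 1 f = f 1 1.
Proof. by move=> hf; rewrite /Sw (hopf_delta_one hopfH hf) big_seq1. Qed.

Lemma Sw_coalg_hom W (B : H -> H) a (f : H -> H -> W) : coalg_hom delta eps B -> bilin f ->
  Sw (B a) f = Sw a (fun x y => f (B x) (B y)).
Proof. by case=> _ hB _ hf; rewrite /Sw (hB a W f hf) big_map. Qed.

Lemma eps_antipode a : eps (S a) = eps a.
Proof.
have : eps (Sw a (fun x y => S x * y)) = eps a.
  by rewrite (Sw_antipodel (L := id)) // eps_scale eps1 mulr1.
move=> <-; rewrite -{1}(hopf_counitr hopfH a) islin_sum // !eps_sum; apply: eq_bigr => p _.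
by rewrite islinZ // eps_scale epsM mulrC.
Qed.

Lemma antipodeM x y : S (x * y) = S y * S x.
Proof.
(* [S(xy) = S(x_1 y_1) x_2 y_2 S(y_3) S(x_3) = S(y) S(x)]. *)
have insert_unit : S (x * y) = Sw3 x (fun x1 a1 a2 =>
    Sw3 y (fun y1 b1 b2 => S (x1 * y1) * (a1 * b1) * (S b2 * S a2))).
  rewrite -{1}(Sw_counitr (L := S) (x * y)) // Sw_mul; last by multilin.
  apply: eq_Sw => x1 x2; rewrite exchange_Sw; apply: eq_Sw => y1 y2.
  rewrite epsM mulrC -scalerA.
  transitivity (Sw x2 (fun a1 a2 => eps y2 *: (S (x1 * y1) * (a1 * S a2)))).
    by rewrite Sw_scale (Sw_antipoder (L := fun t => S (x1 * y1) * t)) ?mulr1 //; lin.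
  apply: eq_Sw => a1 a2; symmetry.
  rewrite (Sw_antipoder_eq (L := fun t => S (x1 * y1) * (a1 * t) * S a2)) ?mulr1 ?mulrA //.
    by lin.
  by move=> b1 b2; rewrite !mulrA.
have collapse X Y x3 y3 :
    Sw X (fun x1 a1 => Sw Y (fun y1 b1 => S (x1 * y1) * (a1 * b1) * (S y3 * S x3)))
    = eps X *: (eps Y *: (S y3 * S x3)).
  transitivity (Sw (X * Y) (fun p q => S p * q * (S y3 * S x3))).
    by rewrite Sw_mul //; multilin.
  by rewrite (Sw_antipodel (L := fun t => t * _)) ?mul1r ?epsM ?scalerA //; lin.
rewrite insert_unit -Sw3_split1; last by multilin.
transitivity (Sw x (fun X x3 => eps X *: Sw y (fun Y y3 => eps Y *: (S y3 * S x3)))).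
  apply: eq_Sw => X x3; rewrite -Sw_scale.
  transitivity (Sw X (fun x1 a1 => Sw y (fun Y y3 =>
      Sw Y (fun y1 b1 => S (x1 * y1) * (a1 * b1) * (S y3 * S x3))))).
    by apply: eq_Sw => x1 a1; rewrite -Sw3_split1 //; multilin.
  by rewrite exchange_Sw; apply: eq_Sw => Y y3; apply: collapse.
rewrite (Sw_counitl_eq (L := fun t => S y * S t)) //; first by lin.
by move=> X x3; rewrite (Sw_counitl (L := fun t => S t * S x3)) //; lin.
Qed.

Lemma Sw_delta_antipode_swap W (f : H -> H -> W) s t v : bilin f ->
  Sw v (fun p q => Sw p (fun p1 p2 => Sw q (fun q1 q2 => f (s * p1 * S q2) (t * p2 * S q1))))
  = eps v *: f s t.
Proof.
case=> hf1 hf2.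
rewrite (@Sw3_split1 _ v (fun p1 p2 q => Sw q (fun q1 q2 => f (s * p1 * S q2) (t * p2 * S q1))));
  last by multilin.
rewrite -[Sw3 _ _]/(Sw4 v (fun p1 p2 q1 q2 => f (s * p1 * S q2) (t * p2 * S q1))).
rewrite -Sw4_split2; last by multilin.
transitivity (Sw3 v (fun p1 w q2 => eps w *: f (s * p1 * S q2) t)).
  apply: eq_Sw3 => p1 w q2; rewrite -[t in RHS]mulr1.
  by apply: (Sw_antipoder_eq (L := fun r => f (s * p1 * S q2) (t * r))) => [|? ?];
    rewrite ?mulrA //; lin.
transitivity (Sw v (fun p1 q2 => f (s * p1 * S q2) t)).
  apply: eq_Sw => p1 Y.
  by apply: (Sw_counitl_eq (L := fun q2 => f (s * p1 * S q2) t)) => //; lin.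
rewrite -[s in RHS]mulr1.
by apply: (Sw_antipoder_eq (L := fun r => f (s * r) t)) => [|? ?]; rewrite ?mulrA //; lin.
Qed.

(* [c |-> Delta (S c)] and [c |-> S c_2 (x) S c_1] are a left and a right convolution
   inverse of [Delta], so they coincide. *)
Lemma Sw_antipode W (f : H -> H -> W) c : bilin f ->
  Sw (S c) f = Sw c (fun u v => f (S v) (S u)).
Proof.
move=> hf; have [hf1 hf2] := hf.
pose M r q1 q2 := Sw r (fun al be => f (al * S q2) (be * S q1)).
rewrite -(Sw_counitr (L := fun t => Sw (S t) f)); last by lin.
transitivity (Sw3 c (fun c1 p q => Sw q (fun q1 q2 => M (S c1 * p) q1 q2))).
  apply: eq_Sw => c1 c2; rewrite -Sw_scale.
  transitivity (Sw (S c1) (fun s t => Sw c2 (fun p q => Sw p (fun p1 p2 =>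
      Sw q (fun q1 q2 => f (s * p1 * S q2) (t * p2 * S q1)))))).
    by apply: eq_Sw => s t; rewrite Sw_delta_antipode_swap.
  rewrite exchange_Sw; apply: eq_Sw => p q.
  transitivity (Sw (S c1) (fun s t => Sw q (fun q1 q2 => Sw p (fun p1 p2 =>
      f (s * p1 * S q2) (t * p2 * S q1))))).
    by apply: eq_Sw => s t; rewrite exchange_Sw.
  rewrite exchange_Sw; apply: eq_Sw => q1 q2.
  by rewrite /M Sw_mul //; multilin.
rewrite -Sw3_split1; last by multilin.
transitivity (Sw c (fun X q => eps X *: Sw q (fun q1 q2 => f (S q2) (S q1)))).
  apply: eq_Sw => X q; rewrite exchange_Sw -Sw_scale; apply: eq_Sw => q1 q2.
  rewrite (Sw_antipodel (L := fun r => M r q1 q2)); last by rewrite /M; lin.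
  by rewrite /M Sw_one ?mul1r //; multilin.
by rewrite (Sw_counitl (L := fun q => Sw q (fun q1 q2 => f (S q2) (S q1)))) //; lin.
Qed.

Lemma Sw_antipodel_hom W (B : H -> H) (L : H -> W) a (g : H -> H -> W) :
  coalg_hom delta eps B -> islin L -> (forall x y, g x y = L (S (B x) * B y)) ->
  Sw a g = eps a *: L 1.
Proof.
move=> hB hL e; have [_ _ epsB] := hB.
rewrite (eq_Sw _ e) -(@Sw_coalg_hom _ B a (fun s t => L (S s * t)) hB); last by multilin.
by rewrite Sw_antipodel // epsB.
Qed.

Section Cocommutative.
Hypothesis cocommH : cocommutative delta.

Lemma Sw_cocomm W a (f : H -> H -> W) : bilin f -> Sw a f = Sw a (fun x y => f y x).
Proof. by move=> hf; rewrite /Sw (cocommH a hf) big_map. Qed.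

Lemma Sw4_swap34 W a (g : H -> H -> H -> H -> W) : quadrilin g ->
  Sw4 a g = Sw4 a (fun x1 x2 x3 x4 => g x1 x2 x4 x3).
Proof. by case=> *; apply: eq_Sw3 => x y z; rewrite Sw_cocomm //; multilin. Qed.

Lemma Sw4_swap23 W a (g : H -> H -> H -> H -> W) : quadrilin g ->
  Sw4 a g = Sw4 a (fun x1 x2 x3 x4 => g x1 x3 x2 x4).
Proof.
move=> hg; have [*] := hg; rewrite -Sw4_split2 // -Sw4_split2; last by multilin.
by apply: eq_Sw3 => x y z; rewrite Sw_cocomm //; multilin.
Qed.

Section CoalgebraMaps.
Variables B1 B2 : H -> H.
Hypotheses (homB1 : coalg_hom delta eps B1) (homB2 : coalg_hom delta eps B2).
Let linB1 : islin B1. Proof. by case: homB1. Qed.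
Let linB2 : islin B2. Proof. by case: homB2. Qed.

Local Notation circ := (descendent delta S B1 B2).
Local Notation sig := (rbs_cocycle delta S B1 B2).

Lemma descendentE a b : circ a b = Sw a (fun x y => B1 x * b * S (B2 y)).
Proof. by []. Qed.

Lemma rbs_cocycleE a : sig a = Sw a (fun x y => B1 x * S (B2 y)).
Proof. by []. Qed.

Lemma rbs_cocycle_descendent1 a : sig a = circ a 1.
Proof. by rewrite rbs_cocycleE descendentE; apply: eq_Sw => x y; rewrite mulr1. Qed.

Lemma bilin_descendent : bilin circ.
Proof.
split=> [b | a].
- by change (islin (fun a => Sw a (fun x y => B1 x * b * S (B2 y)))); lin.
- by change (islin (fun b => Sw a (fun x y => B1 x * b * S (B2 y)))); lin.
Qed.

Lemma eps_descendent a b : eps (circ a b) = eps a * eps b.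
Proof.
have [_ _ epsB1] := homB1; have [_ _ epsB2] := homB2.
rewrite descendentE /Sw eps_sum -{2}(hopf_counitr hopfH a) eps_sum mulr_suml.
by apply: eq_bigr => p _; rewrite !epsM eps_antipode epsB1 epsB2 eps_scale mulrC mulrA.
Qed.

Lemma Sw_descendent_summand W (f : H -> H -> W) x b y : bilin f ->
  Sw (B1 x * b * S (B2 y)) f = Sw x (fun x1 x2 => Sw b (fun u v => Sw y (fun y1 y2 =>
    f (B1 x1 * u * S (B2 y2)) (B1 x2 * v * S (B2 y1))))).
Proof.
move=> hf; have [*] := hf.
rewrite Sw_mul; last by multilin.
rewrite Sw_mul; last by multilin.
rewrite Sw_coalg_hom //; last by multilin.
apply: eq_Sw => x1 x2; apply: eq_Sw => u v.
by rewrite Sw_antipode ?Sw_coalg_hom //; multilin.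
Qed.

Lemma Sw_descendent W (f : H -> H -> W) a b : bilin f ->
  Sw (circ a b) f = Sw a (fun x y => Sw b (fun u v => f (circ x u) (circ y v))).
Proof.
move=> hf; have [*] := hf.
transitivity (Sw b (fun u v => Sw4 a (fun a1 a2 a3 a4 =>
    f (B1 a1 * u * S (B2 a4)) (B1 a2 * v * S (B2 a3))))).
  rewrite descendentE Sw_Sw //.
  transitivity (Sw a (fun x y => Sw b (fun u v => Sw x (fun x1 x2 => Sw y (fun y1 y2 =>
      f (B1 x1 * u * S (B2 y2)) (B1 x2 * v * S (B2 y1))))))).
    by apply: eq_Sw => x y; rewrite Sw_descendent_summand //; apply: exchange_Sw.
  rewrite exchange_Sw; apply: eq_Sw => u v.
  by apply: Sw4_split_both; multilin.
symmetry; rewrite exchange_Sw; apply: eq_Sw => u v.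
(* Cocommutativity turns [a_1 a_4 | a_2 a_3] into [a_1 a_2 | a_3 a_4]. *)
rewrite Sw4_swap34; last by multilin.
rewrite Sw4_swap23; last by multilin.
rewrite -Sw4_split_both; last by multilin.
apply: eq_Sw => x y; rewrite !descendentE -(Sw_lin (L := fun t => f t _)) //.
by apply: eq_Sw => x1 x2; rewrite -Sw_lin.
Qed.

Lemma coalg_hom_rbs_cocycle : coalg_hom delta eps sig.
Proof.
split.
- by move=> k u v; rewrite !rbs_cocycleE; apply: (Sw_islin (f := fun x y => B1 x * S (B2 y)));
    multilin.
- move=> a W f hf; have [*] := hf.
  rewrite big_map -/(Sw (sig a) f) -/(Sw a (fun x y => f (sig x) (sig y))).
  rewrite rbs_cocycle_descendent1 Sw_descendent //.
  apply: eq_Sw => x y.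
  rewrite (Sw_one (f := fun u v => f (circ x u) (circ y v))); last by multilin.
  by rewrite -!rbs_cocycle_descendent1.
- by move=> a; rewrite rbs_cocycle_descendent1 eps_descendent eps1 mulr1.
Qed.

Lemma Sw_rbs_cocycle_mul_B2 a : Sw a (fun x y => sig x * B2 y) = B1 a.
Proof.
transitivity (Sw a (fun x y => Sw x (fun u v => B1 u * S (B2 v) * B2 y))).
  by apply: eq_Sw => x y; rewrite rbs_cocycleE Sw_mulr.
rewrite (@Sw3_split1 _ _ (fun u v y => B1 u * S (B2 v) * B2 y)); last by multilin.
apply: (Sw_counitr_eq (L := B1)) => // u Y.
rewrite -[B1 u in RHS]mulr1.
by apply: (Sw_antipodel_hom (L := fun t => B1 u * t) _ homB2) => [|v y]; rewrite ?mulrA //; lin.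
Qed.

Lemma Sw_antipode_rbs_cocycle_mul_B1 a : Sw a (fun x y => S (sig x) * B1 y) = B2 a.
Proof.
have hom_sig := coalg_hom_rbs_cocycle; have [lin_sig _ _] := hom_sig.
transitivity (Sw3 a (fun x y z => S (sig x) * sig y * B2 z)).
  apply: eq_Sw => x y; rewrite -Sw_rbs_cocycle_mul_B2 -Sw_mull.
  by apply: eq_Sw => p q; rewrite mulrA.
rewrite -Sw3_split1; last by multilin.
apply: (Sw_counitl_eq (L := B2)) => // Y z.
rewrite -[B2 z in RHS]mul1r.
by apply: (Sw_antipodel_hom (L := fun t => t * B2 z) _ hom_sig) => //; lin.
Qed.

Lemma descendentM a b c :
  circ a (b * c) = \sum_(p <- delta3l delta a) circ p.1.1 b * S (sig p.1.2) * circ p.2 c.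
Proof.
have [lin_sig _ _] := coalg_hom_rbs_cocycle; have [linl_circ linr_circ] := bilin_descendent.
pose G x1 x2 y z1 z2 := B1 x1 * b * S (B2 x2) * S (sig y) * (B1 z1 * c * S (B2 z2)).
have expand : \sum_(p <- delta3l delta a) circ p.1.1 b * S (sig p.1.2) * circ p.2 c = Sw5 a G.
  rewrite (@sum_delta3l _ a (fun x y z => circ x b * S (sig y) * circ z c)) Sw3_split1;
    last by multilin.
  rewrite -[Sw5 a G]/(Sw4 a (fun x1 x2 y z => Sw z (fun z1 z2 => G x1 x2 y z1 z2))).
  rewrite -Sw4_split1; last by multilin.
  apply: eq_Sw3 => x y z; rewrite !descendentE -Sw_mulr -Sw_mulr; apply: eq_Sw => x1 x2.
  by rewrite -Sw_mull.
have cancel_cocycle : Sw5 a G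
    = Sw4 a (fun x1 x2 w z2 => B1 x1 * b * S (B2 x2) * B2 w * c * S (B2 z2)).
  rewrite -Sw5_split3; last by multilin.
  apply: eq_Sw4 => x1 x2 w z2; rewrite -[B2 w]Sw_antipode_rbs_cocycle_mul_B1.
  rewrite -(Sw_lin (L := fun t => B1 x1 * b * S (B2 x2) * t * c * S (B2 z2))); last by lin.
  by apply: eq_Sw => y z1; rewrite /G !mulrA.
rewrite expand cancel_cocycle -Sw4_split2; last by multilin.
transitivity (Sw3 a (fun x1 v z2 => eps v *: (B1 x1 * b * c * S (B2 z2)))).
  rewrite descendentE /Sw3; apply: eq_Sw => x1 Y.
  by symmetry; apply: (Sw_counitl_eq (L := fun z2 => B1 x1 * (b * c) * S (B2 z2))) => //;
    [lin | move=> v z2; rewrite !mulrA].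
apply: eq_Sw3 => x1 v z2; symmetry; rewrite -[B1 x1 * b]mulr1.
by apply: (Sw_antipodel_hom (L := fun t => B1 x1 * b * t * c * S (B2 z2)) _ homB2) => //;
  [lin | move=> x2 w; rewrite mulr1 !mulrA].
Qed.

Section RotaBaxter.
Hypotheses (rbB1 : forall a b, B1 a * B1 b = B1 (circ a b))
           (rbB2 : forall a b, B2 a * B2 b = B2 (circ a b)).

Lemma descendentA a b c : circ a (circ b c) = circ (circ a b) c.
Proof.
rewrite descendentE [RHS]descendentE Sw_descendent; last by multilin.
apply: eq_Sw => x y; rewrite descendentE -Sw_mull -Sw_mulr; apply: eq_Sw => u v.
by rewrite -rbB1 -rbB2 antipodeM !mulrA.
Qed.

End RotaBaxter.
End CoalgebraMaps.
End Cocommutative.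

End HopfAlgebra.

Theorem mainTheorem7 (F : fieldType) (H : algType F)
  (delta : H -> seq (H * H)) (eps : H -> F) (S B1 B2 : H -> H) :
  [pchar F] =i pred0 ->
  is_RBsystem delta eps S B1 B2 ->
  is_hopf_truss delta eps S (descendent delta S B1 B2) (rbs_cocycle delta S B1 B2).
Proof.
move=> _ [hopfH cocommH homB1 homB2 _ _ rbB1 rbB2].
split=> //.
- exact: (bilin_descendent hopfH homB1 homB2).
- exact: (descendentA hopfH cocommH homB1 homB2 rbB1 rbB2).
- move=> a b W f hf; rewrite big_allpairs_dep.
  exact: (Sw_descendent hopfH cocommH homB1 homB2 a b hf).
- exact: (eps_descendent hopfH homB1 homB2).
- exact: (coalg_hom_rbs_cocycle hopfH cocommH homB1 homB2).
- exact: (descendentM hopfH cocommH homB1 homB2).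
Qed.
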